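(* Let $f:\mathbb{R}\to\mathbb{R}$ be a function whose derivative $f'$ is eventually constant, i.e. there exist $t_-\le t_+$ in $\mathbb{R}$ such that $f'(t)=f'(t_-)$ for all $t\le t_-$ and $f'(t)=f'(t_+)$ for all $t\ge t_+$. Let $g(t)=\max(f(t),0)$. Then $$I(g') \le I(f').$$
   Context: Functions considered are continuous and differentiable except possibly at finitely many points; derivatives are taken where they exist, and $h(\infty)$, $h(-\infty)$ denote the limits of $h(t)$ as $t\to\pm\infty$. For $h:\mathbb{R}\to\mathbb{R}$ the total variation on $[a,b]$ is $V_a^b(h)=\sup_{T}\sum_{t_i\in T}|h(t_i)-h(t_{i-1})|$, the supremum over all partitions $T$ of $[a,b]$, and $V_{-\infty}^{\infty}$ is the corresponding total variation over the whole real line. The intrinsic variability of $h$ is $I(h) = V_{-\infty}^{\infty}(h) + |h(\infty)| + |h(-\infty)|$. *)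

From Stdlib Require Import Reals Lra List Sorted.
From Coquelicot Require Import Coquelicot.
Open Scope R_scope.

Fixpoint var_sum (h : R -> R) (l : list R) : R :=
  match l with
  | x :: ((y :: _) as l') => Rabs (h y - h x) + var_sum h l'
  | _ => 0
  end.

Definition total_var (h : R -> R) (D : R -> Prop) : Rbar :=
  Lub_Rbar (fun r => exists l : list R,
              Sorted Rlt l /\ List.Forall D l /\ r = var_sum h l).

Definition intrinsic_var (h : R -> R) (D : R -> Prop) : Rbar :=
  Rbar_plus (total_var h D)
    (Rbar_plus (Rbar_abs (Lim h p_infty)) (Rbar_abs (Lim h m_infty))).

Definition I_deriv (f : R -> R) : Rbar :=
  intrinsic_var (Derive f) (fun t => ex_derive f t).

From Stdlib Require Import Reals List.
From Coquelicot Require Import Coquelicot.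
From Stdlib Require Import Lra Sorted SetoidList.
Import ListNotations.
Open Scope R_scope.

(* Where g = max(f, 0) is differentiable, g' = f' if f > 0 and g' = 0 if
   f <= 0 (at a root of f, g has a minimum).  Take a sorted family of such
   points and pad the values of g' with 0 at both ends.  A maximal run of
   points with f <= 0 between neighbouring values a, b of f' contributes
   |a| + |b|.  After a point with f > 0 and before the next one with f <= 0,
   f falls, so f'(p) < 0 for some p in between; before the next point with
   f > 0 it rises, so f'(q) > 0 for some q.  Replacing the run by p, q costs
   at least as much, since |f'(p) - a| + |f'(q) - f'(p)| + |b - f'(q)| >=
   |a| + |b| when f'(p) < 0 < f'(q).  So every 0-padded variation sum of g'
   is dominated by one of f'.  Since f is eventually affine, f' and g' are
   eventually constant, and adding points far out turns 0-padded sums into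
   variation sums plus the two limit terms of I. *)

Fixpoint padded_var (h : R -> R) (a : R) (l : list R) (b : R) : R :=
  match l with
  | [] => Rabs (b - a)
  | x :: l' => Rabs (h x - a) + padded_var h (h x) l' b
  end.

Lemma var_sum_le_padded_var (h : R -> R) (a : R) (l : list R) (b : R) :
  var_sum h l <= padded_var h a l b.
Proof.
  revert a; induction l as [|x l IH]; intros a; cbn [padded_var].
  - apply Rabs_pos.
  - destruct l as [|y l]; cbn [var_sum padded_var] in *.
    + pose proof (Rabs_pos (h x - a)); pose proof (Rabs_pos (b - h x)); lra.
    + specialize (IH (h y)); cbn [padded_var] in IH.
      rewrite Rminus_diag, Rabs_R0 in IH.
      pose proof (Rabs_pos (h x - a)); lra.
Qed.

Lemma padded_var_ends (h : R -> R) (a a' : R) (l : list R) (b b' : R) :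
  padded_var h a l b <= Rabs (a' - a) + padded_var h a' l b' + Rabs (b - b').
Proof.
  revert a a'; induction l as [|x l IH]; intros a a'; cbn [padded_var].
  - pose proof (Rabs_triang (b - b') (b' - a')).
    pose proof (Rabs_triang (b - a') (a' - a)).
    replace (b - b' + (b' - a')) with (b - a') in * by ring.
    replace (b - a' + (a' - a)) with (b - a) in * by ring. lra.
  - specialize (IH (h x) (h x)). rewrite Rminus_diag, Rabs_R0 in IH.
    pose proof (Rabs_triang (h x - a') (a' - a)).
    replace (h x - a' + (a' - a)) with (h x - a) in * by ring. lra.
Qed.

Lemma padded_var_snoc (h : R -> R) (a : R) (l : list R) (hi b : R) :
  padded_var h a (l ++ [hi]) b = padded_var h a l (h hi) + Rabs (b - h hi).
Proof.
  revert a; induction l as [|x l IH]; intros a; cbn [padded_var app].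
  - reflexivity.
  - rewrite IH; ring.
Qed.

Lemma var_sum_sandwich (h : R -> R) (lo : R) (l : list R) (hi : R) :
  var_sum h (lo :: l ++ [hi]) = padded_var h (h lo) l (h hi).
Proof.
  revert lo; induction l as [|x l IH]; intros lo; cbn [app var_sum padded_var].
  - ring.
  - rewrite <- IH; reflexivity.
Qed.

Lemma padded_var_zero_sandwich (h : R -> R) (lo : R) (l : list R) (hi : R) :
  padded_var h 0 (lo :: l ++ [hi]) 0 =
  Rabs (h lo) + padded_var h (h lo) l (h hi) + Rabs (h hi).
Proof.
  cbn [padded_var]. rewrite padded_var_snoc, Rminus_0_r, Rminus_0_l, Rabs_Ropp.
  ring.
Qed.

Lemma Sorted_sandwich (lo : R) (l : list R) (hi : R) :
  Sorted Rlt l -> lo < hi -> (forall y, In y l -> lo < y < hi) ->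
  Sorted Rlt (lo :: l ++ [hi]).
Proof.
  intros Hl Hlohi Hb.
  apply (SortA_app (eqA := eq) eq_equivalence (l1 := lo :: l) (l2 := [hi])).
  - destruct l as [|x l]; constructor; auto.
    constructor. apply Hb; left; reflexivity.
  - repeat constructor.
  - intros x y Hx Hy.
    apply InA_alt in Hx as [x' [<- Hx]]. apply InA_singleton in Hy as ->.
    destruct Hx as [<-|Hx]; [exact Hlohi|apply Hb, Hx].
Qed.

Lemma list_bounded (l : list R) : exists M, forall y, In y l -> Rabs y < M.
Proof.
  induction l as [|x l [M HM]].
  - exists 0; intros y [].
  - exists (Rmax M (Rabs x + 1)); intros y [<-|Hy].
    + pose proof (Rmax_r M (Rabs x + 1)); lra.
    + pose proof (Rmax_l M (Rabs x + 1)); pose proof (HM y Hy); lra.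
Qed.

Lemma exists_sandwich (D : R -> Prop) (l : list R) (L0 R0 : R) :
  Sorted Rlt l -> Forall D l ->
  (forall t, t < L0 -> D t) -> (forall t, R0 < t -> D t) ->
  exists lo hi, lo < L0 /\ R0 < hi /\
    Sorted Rlt (lo :: l ++ [hi]) /\ Forall D (lo :: l ++ [hi]).
Proof.
  intros Hs Hf HL HR. destruct (list_bounded l) as [M HM].
  set (lo := Rmin (- M) L0 - 1); set (hi := Rmax (Rmax M R0) L0 + 1).
  assert (lo < L0 /\ lo < - M).
  { pose proof (Rmin_l (- M) L0); pose proof (Rmin_r (- M) L0); unfold lo; lra. }
  assert (R0 < hi /\ L0 < hi /\ M < hi).
  { pose proof (Rmax_l (Rmax M R0) L0); pose proof (Rmax_r (Rmax M R0) L0).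
    pose proof (Rmax_l M R0); pose proof (Rmax_r M R0); unfold hi; lra. }
  exists lo, hi; repeat split; try lra.
  - apply Sorted_sandwich; [exact Hs|lra|].
    intros y Hy; specialize (HM y Hy); apply Rabs_def2 in HM; lra.
  - constructor; [apply HL; lra|].
    apply Forall_app; split; [exact Hf|repeat constructor; apply HR; lra].
Qed.

Lemma Lub_Rbar_plus_le (E E' : R -> Prop) (a b : R) :
  (forall r, E r -> exists s, E' s /\ r + a <= s + b) ->
  Rbar_le (Rbar_plus (Lub_Rbar E) a) (Rbar_plus (Lub_Rbar E') b).
Proof.
  intros H.
  destruct (Lub_Rbar_correct E) as [_ lub].
  destruct (Lub_Rbar_correct E') as [ub' _].
  destruct (Lub_Rbar E') as [u| |].
  - assert (Rbar_le (Lub_Rbar E) (u + b - a)).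
    { apply lub; intros r Hr. destruct (H r Hr) as [s [Hs Hrs]].
      specialize (ub' s Hs); cbn in *; lra. }
    destruct (Lub_Rbar E); cbn in *; lra || tauto.
  - destruct (Rbar_plus (Lub_Rbar E) a); exact I.
  - assert (Rbar_le (Lub_Rbar E) m_infty).
    { apply lub; intros r Hr. destruct (H r Hr) as [s [Hs _]].
      exact (ub' s Hs). }
    destruct (Lub_Rbar E); cbn in *; tauto.
Qed.

Lemma Lim_p_infty_eventually_const (h : R -> R) (M v : R) :
  (forall t, M < t -> h t = v) -> Lim h p_infty = v.
Proof.
  intros H. apply is_lim_unique, (is_lim_ext_loc (fun _ => v)).
  - exists M; intros t Ht; symmetry; apply H, Ht.
  - apply is_lim_const.
Qed.

Lemma Lim_m_infty_eventually_const (h : R -> R) (M v : R) :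
  (forall t, t < M -> h t = v) -> Lim h m_infty = v.
Proof.
  intros H. apply is_lim_unique, (is_lim_ext_loc (fun _ => v)).
  - exists M; intros t Ht; symmetry; apply H, Ht.
  - apply is_lim_const.
Qed.

Lemma intrinsic_var_eventually_const (h : R -> R) (D : R -> Prop) (ml mr vl vr : R) :
  (forall t, t < ml -> h t = vl) -> (forall t, mr < t -> h t = vr) ->
  intrinsic_var h D = Rbar_plus (total_var h D) (Rabs vr + Rabs vl).
Proof.
  intros Hl Hr; unfold intrinsic_var.
  rewrite (Lim_m_infty_eventually_const h ml vl Hl).
  rewrite (Lim_p_infty_eventually_const h mr vr Hr).
  reflexivity.
Qed.

Section PositivePart.

Variable f : R -> R.
Let g (t : R) : R := Rmax (f t) 0.

Lemma Derive_pos_part_locally_pos (t : R) :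
  locally t (fun s => 0 < f s) ->
  (ex_derive g t <-> ex_derive f t) /\ Derive g t = Derive f t.
Proof.
  intros Hpos.
  assert (Hfg : locally t (fun s => f s = g s)).
  { refine (filter_imp _ _ _ Hpos); intros s Hs; unfold g; rewrite Rmax_left; lra. }
  split; [split|].
  - apply (ex_derive_ext_loc g f t). refine (filter_imp _ _ _ Hfg); auto.
  - apply (ex_derive_ext_loc f g t Hfg).
  - symmetry; apply (Derive_ext_loc f g t Hfg).
Qed.

Lemma Derive_pos_part_locally_nonpos (t : R) :
  locally t (fun s => f s <= 0) -> ex_derive g t /\ Derive g t = 0.
Proof.
  intros Hnonpos.
  assert (H0g : locally t (fun s => 0 = g s)).
  { refine (filter_imp _ _ _ Hnonpos); intros s Hs; unfold g; rewrite Rmax_right; lra. }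
  split.
  - apply (ex_derive_ext_loc _ g t H0g), ex_derive_const.
  - rewrite <- (Derive_ext_loc _ g t H0g); apply Derive_const.
Qed.

Lemma Derive_pos_part_root (t : R) :
  f t = 0 -> ex_derive g t -> Derive g t = 0.
Proof.
  intros Hroot Hg. rewrite <- (Derive_Reals g t (ex_derive_Reals_0 _ _ Hg)).
  apply (deriv_minimum g (t - 1) (t + 1)); try lra.
  intros s _ _; unfold g; rewrite Hroot, Rmax_right by lra; apply Rmax_r.
Qed.

Lemma Derive_pos_part (t : R) : continuous f t -> ex_derive g t ->
  (0 < f t -> ex_derive f t /\ Derive g t = Derive f t) /\
  (f t <= 0 -> Derive g t = 0).
Proof.
  intros Hc Hg; split; intros Hsign.
  - destruct (Derive_pos_part_locally_pos t) as [Hex Hd].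
    + exact (Hc _ (open_gt 0 (f t) Hsign)).
    + split; [apply Hex, Hg|exact Hd].
  - destruct (Rle_lt_or_eq_dec _ _ Hsign) as [Hneg|Hroot].
    + apply Derive_pos_part_locally_nonpos.
      apply (filter_imp (fun s => f s < 0)); [intros; lra|].
      exact (Hc _ (open_lt 0 (f t) Hneg)).
    + apply Derive_pos_part_root; assumption.
Qed.

Lemma Derive_pos_part_on_open (U : R -> Prop) (c : R) : open U ->
  (forall t, U t -> ex_derive f t /\ Derive f t = c) ->
  (forall t, U t -> 0 < f t) \/ (forall t, U t -> f t <= 0) ->
  exists v, forall t, U t -> ex_derive g t /\ Derive g t = v.
Proof.
  intros HU Hf [Hpos|Hnonpos]; [exists c|exists 0]; intros t Ht.
  - destruct (Derive_pos_part_locally_pos t) as [Hex Hd].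
    + exact (filter_imp _ _ Hpos (HU t Ht)).
    + destruct (Hf t Ht) as [Hex' Hc].
      split; [apply Hex, Hex'|rewrite Hd; exact Hc].
  - apply Derive_pos_part_locally_nonpos.
    exact (filter_imp _ _ Hnonpos (HU t Ht)).
Qed.

End PositivePart.

Lemma Derive_const_affine (f : R -> R) (a b c : R) :
  (forall t, Rmin a b <= t <= Rmax a b -> ex_derive f t /\ Derive f t = c) ->
  f b = f a + c * (b - a).
Proof.
  intros Hd.
  destruct (MVT_gen f a b (fun _ => c)) as [t [_ Hmvt]]; [| |lra].
  - intros t Ht. destruct (Hd t) as [Hex <-]; [lra|].
    apply Derive_correct, Hex.
  - intros t Ht.
    apply continuity_pt_filterlim, (@ex_derive_continuous R_AbsRing), Hd, Ht.
Qed.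

Lemma affine_sign_eventually (c d : R) : exists M,
  (forall t, M < t -> 0 < c * t + d) \/ (forall t, M < t -> c * t + d <= 0).
Proof.
  destruct (Req_dec c 0) as [->|Hc].
  - exists 0. destruct (Rlt_or_le 0 d); [left|right]; intros; lra.
  - exists (- d / c).
    assert (Hroot : forall t, c * t + d = c * (t - - d / c)) by (intros; field; exact Hc).
    destruct (Rlt_or_le 0 c); [left|right]; intros t Ht; rewrite Hroot; nra.
Qed.

Lemma Derive_pos_part_eventually_p_infty (f : R -> R) (tp : R) :
  (forall t, tp <= t -> ex_derive f t /\ Derive f t = Derive f tp) ->
  exists M v, forall t, M < t ->
    ex_derive (fun s => Rmax (f s) 0) t /\ Derive (fun s => Rmax (f s) 0) t = v.
Proof.
  intros Hd. set (c := Derive f tp) in Hd.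
  assert (Haff : forall t, tp <= t -> f t = c * t + (f tp - c * tp)).
  { intros t Ht. rewrite (Derive_const_affine f tp t c); [ring|].
    intros s Hs; rewrite Rmin_left, Rmax_right in Hs by lra; apply Hd; lra. }
  destruct (affine_sign_eventually c (f tp - c * tp)) as [M HM].
  set (M' := Rmax M tp).
  assert (HM' : forall t, M' < t -> M < t /\ tp <= t).
  { intros t Ht; pose proof (Rmax_l M tp); pose proof (Rmax_r M tp).
    unfold M' in Ht; lra. }
  destruct (Derive_pos_part_on_open f (fun t => M' < t) c (open_gt M')) as [v Hv].
  - intros t Ht; apply Hd, HM', Ht.
  - destruct HM as [HM|HM]; [left|right]; intros t Ht;
      destruct (HM' t Ht); rewrite Haff by assumption; apply HM; assumption.
  - exists M', v; exact Hv.
Qed.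

Lemma Derive_pos_part_eventually_m_infty (f : R -> R) (tm : R) :
  (forall t, t <= tm -> ex_derive f t /\ Derive f t = Derive f tm) ->
  exists M v, forall t, t < M ->
    ex_derive (fun s => Rmax (f s) 0) t /\ Derive (fun s => Rmax (f s) 0) t = v.
Proof.
  intros Hd. set (c := Derive f tm) in Hd.
  assert (Haff : forall t, t <= tm -> f t = (- c) * (- t) + (f tm - c * tm)).
  { intros t Ht. rewrite (Derive_const_affine f tm t c); [ring|].
    intros s Hs; rewrite Rmin_right, Rmax_left in Hs by lra; apply Hd; lra. }
  destruct (affine_sign_eventually (- c) (f tm - c * tm)) as [M HM].
  set (M' := Rmin (- M) tm).
  assert (HM' : forall t, t < M' -> M < - t /\ t <= tm).
  { intros t Ht; pose proof (Rmin_l (- M) tm); pose proof (Rmin_r (- M) tm).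
    unfold M' in Ht; lra. }
  destruct (Derive_pos_part_on_open f (fun t => t < M') c (open_lt M')) as [v Hv].
  - intros t Ht; apply Hd, HM', Ht.
  - destruct HM as [HM|HM]; [left|right]; intros t Ht;
      destruct (HM' t Ht); rewrite Haff by assumption; apply HM; assumption.
  - exists M', v; exact Hv.
Qed.

Lemma rise_Derive_pos (h : R -> R) (bad : list R) : (forall t, continuous h t) ->
  forall x y, x < y -> h x < h y ->
  (forall c, x < c < y -> ~ In c bad -> ex_derive h c) ->
  exists c, x < c < y /\ ~ In c bad /\ 0 < Derive h c.
Proof.
  intros Hc; induction bad as [|b bad IH]; intros x y Hxy Hrise Hd.
  - assert (pr : forall c, x < c < y -> derivable_pt h c)
      by (intros c Hxcy; apply ex_derive_Reals_0, Hd; auto).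
    destruct (MVT h id x y pr (fun c _ => derivable_pt_id c) Hxy) as [c [Hxcy Hmvt]].
    + intros c _; apply continuity_pt_filterlim, Hc.
    + intros c _; apply derivable_continuous_pt, derivable_pt_id.
    + rewrite derive_pt_id, Derive_Reals in Hmvt; unfold id in Hmvt.
      exists c; split; [exact Hxcy|split; [auto|nra]].
  - (* If b lies inside (x, y), then h rises on [x, b] or on [b, y]. *)
    assert (Hsub : forall u v, x <= u -> u < v -> v <= y -> ~ (u < b < v) ->
      h u < h v -> exists c, u < c < v /\ ~ In c (b :: bad) /\ 0 < Derive h c).
    { intros u v Hxu Huv Hvy Hb Hrise'.
      destruct (IH u v Huv Hrise') as [c [Hucv [Hc' Hpos]]].
      - intros c Hucv Hc'; apply Hd; [lra|intros [->|Hin]; [lra|auto]].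
      - exists c; split; [exact Hucv|split; [intros [->|Hin]; [lra|auto]|exact Hpos]]. }
    destruct (Rlt_dec x b) as [Hxb|Hxb]; [destruct (Rlt_dec b y) as [Hby|Hby]|].
    + destruct (Rlt_or_le (h x) (h b)) as [Hxb'|Hbx].
      * destruct (Hsub x b) as [c [Hc' Hrest]]; auto; try lra.
        exists c; split; [lra|exact Hrest].
      * destruct (Hsub b y) as [c [Hc' Hrest]]; auto; try lra.
        exists c; split; [lra|exact Hrest].
    + apply (Hsub x y); auto; lra.
    + apply (Hsub x y); auto; lra.
Qed.

Lemma fall_Derive_neg (h : R -> R) (bad : list R) : (forall t, continuous h t) ->
  forall x y, x < y -> h y < h x ->
  (forall c, x < c < y -> ~ In c bad -> ex_derive h c) ->
  exists c, x < c < y /\ ~ In c bad /\ Derive h c < 0.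
Proof.
  intros Hc x y Hxy Hfall Hd.
  assert (Hc' : forall t, continuous (fun s => - h s) t)
    by (intros t; exact (continuous_opp h t (Hc t))).
  destruct (rise_Derive_pos (fun t => - h t) bad Hc' x y Hxy) as [c [Hxcy [Hnb Hpos]]].
  - lra.
  - intros c Hxcy Hnb; exact (ex_derive_opp h c (Hd c Hxcy Hnb)).
  - rewrite Derive_opp in Hpos.
    exists c; split; [exact Hxcy|split; [exact Hnb|lra]].
Qed.

Lemma Rabs_add_le_detour (a b p q : R) : p < 0 -> 0 < q ->
  Rabs a + Rabs b <= Rabs (p - a) + Rabs (q - p) + Rabs (b - q).
Proof. intros; unfold Rabs; repeat destruct Rcase_abs; lra. Qed.

Section Lifting.

Variables (f f' g' : R -> R) (Df Dg : R -> Prop).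
Hypothesis Dg_pos : forall x, Dg x -> 0 < f x -> Df x /\ g' x = f' x.
Hypothesis Dg_nonpos : forall x, Dg x -> f x <= 0 -> g' x = 0.
Hypothesis rise : forall x y, x < y -> f x < f y ->
  exists c, x < c < y /\ Df c /\ 0 < f' c.
Hypothesis fall : forall x y, x < y -> f y < f x ->
  exists c, x < c < y /\ Df c /\ f' c < 0.

(* Prepending a point x' with f x' > 0 to a list starting at a point with
   f <= 0 needs a rise of f before the head of l2; the second clause
   provides it. *)
Definition lifted_from (x : R) (l2 : list R) : Prop :=
  match l2 with
  | [] => f x <= 0
  | h :: _ => (0 < f x -> h = x) /\ (f x <= 0 -> x < h /\ 0 < f h)
  end.

Lemma lift_bridge (x' x h : R) (t : list R) :
  x' < x < h -> f x <= 0 < f x' -> 0 < f h -> Df x' ->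
  Sorted Rlt (h :: t) -> Forall Df (h :: t) ->
  exists p q, Sorted Rlt (x' :: p :: q :: h :: t) /\
    Forall Df (x' :: p :: q :: h :: t) /\
    padded_var f' 0 (h :: t) 0 + 2 * Rabs (f' x') <=
    padded_var f' 0 (x' :: p :: q :: h :: t) 0.
Proof.
  intros Hord Hsign Hh Dx' Hs Hf.
  destruct (fall x' x) as [p [Hp [Dp Hp']]]; [lra|lra|].
  destruct (rise x h) as [q [Hq [Dq Hq']]]; [lra|lra|].
  exists p, q; split; [|split].
  - repeat (apply Sorted_cons; [|constructor; lra]); assumption.
  - repeat constructor; assumption || now inversion Hf.
  - cbn [padded_var]. rewrite !Rminus_0_r.
    pose proof (Rabs_add_le_detour (f' x') (f' h) (f' p) (f' q) Hp' Hq'). lra.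
Qed.

Lemma lift_cons (x' x : R) (l2 : list R) : x' < x -> Dg x' -> Dg x ->
  Sorted Rlt l2 -> Forall Df l2 -> lifted_from x l2 ->
  exists l2', Sorted Rlt l2' /\ Forall Df l2' /\ lifted_from x' l2' /\
    padded_var f' 0 l2 0 + (Rabs (g' x') + Rabs (g' x - g' x') - Rabs (g' x))
    <= padded_var f' 0 l2' 0.
Proof.
  intros Hxx' Dx' Dx Hs Hf Hlift.
  destruct (Rlt_or_le 0 (f x')) as [Px'|Nx'].
  - destruct (Dg_pos x' Dx' Px') as [Dfx' ->].
    destruct (Rlt_or_le 0 (f x)) as [Px|Nx].
    + destruct l2 as [|h t]; [cbn in Hlift; lra|].
      destruct Hlift as [Hh _]; rewrite (Hh Px) in *.
      destruct (Dg_pos x Dx Px) as [_ ->].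
      exists (x' :: x :: t); split; [|split; [|split]].
      * apply Sorted_cons; [assumption|constructor; assumption].
      * constructor; assumption.
      * split; intros; lra.
      * cbn [padded_var]; rewrite !Rminus_0_r; lra.
    + rewrite (Dg_nonpos x Dx Nx), Rminus_0_l, Rabs_Ropp, Rabs_R0.
      destruct l2 as [|h t].
      * exists [x']; split; [|split; [|split]].
        -- repeat constructor.
        -- repeat constructor; assumption.
        -- split; intros; lra.
        -- cbn [padded_var]. rewrite !Rminus_0_r, Rminus_0_l, Rabs_Ropp, Rabs_R0.
           lra.
      * destruct Hlift as [_ Hh]; destruct (Hh Nx) as [Hxh Ph].
        destruct (lift_bridge x' x h t) as [p [q [Hs' [Hf' Hvar]]]]; auto; try lra.
        exists (x' :: p :: q :: h :: t); split; [|split; [|split]]; auto.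
        -- split; intros; lra.
        -- lra.
  - rewrite (Dg_nonpos x' Dx' Nx'), Rabs_R0, Rminus_0_r.
    exists l2; split; [|split; [|split]]; auto; [|lra].
    destruct l2 as [|h t]; cbn in *; [exact Nx'|split; [lra|intros _]].
    destruct (Rlt_or_le 0 (f x)) as [Px|Nx].
    + destruct Hlift as [Hh _]; rewrite (Hh Px); split; assumption.
    + destruct Hlift as [_ Hh]; destruct (Hh Nx); split; lra.
Qed.

Lemma lift_list (l : list R) (x : R) :
  Sorted Rlt (x :: l) -> Forall Dg (x :: l) ->
  exists l2, Sorted Rlt l2 /\ Forall Df l2 /\ lifted_from x l2 /\
    padded_var g' 0 (x :: l) 0 <= padded_var f' 0 l2 0.
Proof.
  revert x; induction l as [|y l IH]; intros x Hs Hd.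
  - inversion Hd as [|? ? Dx _]; subst.
    destruct (Rlt_or_le 0 (f x)) as [Px|Nx].
    + destruct (Dg_pos x Dx Px) as [Dfx Ex].
      exists [x]; split; [|split; [|split]].
      * repeat constructor.
      * repeat constructor; assumption.
      * split; intros; lra.
      * cbn [padded_var]; rewrite Ex; lra.
    + exists []; split; [|split; [|split]]; auto.
      cbn [padded_var]; rewrite (Dg_nonpos x Dx Nx).
      rewrite Rminus_diag, Rabs_R0; lra.
  - inversion Hs as [|? ? Hs' Hhd]; inversion Hd as [|? ? Dx Hd']; subst.
    inversion Hhd; subst.
    destruct (IH y Hs' Hd') as [l2 [Hs2 [Hf2 [Hlift Hvar]]]].
    inversion Hd' as [|? ? Dy _]; subst.
    destruct (lift_cons x y l2) as [l2' [Hs2' [Hf2' [Hlift' Hvar']]]]; auto.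
    exists l2'; split; [|split; [|split]]; auto.
    cbn [padded_var] in *; rewrite Rminus_0_r in *; lra.
Qed.

Lemma padded_var_lift (l : list R) : Sorted Rlt l -> Forall Dg l ->
  exists l2, Sorted Rlt l2 /\ Forall Df l2 /\
    padded_var g' 0 l 0 <= padded_var f' 0 l2 0.
Proof.
  destruct l as [|x l]; intros Hs Hd.
  - exists []; cbn; repeat split; auto; lra.
  - destruct (lift_list l x Hs Hd) as [l2 [? [? [_ ?]]]]; eauto.
Qed.

End Lifting.

Lemma padded_var_pos_part_lift (f : R -> R) (bad : list R) :
  (forall t, continuous f t) -> (forall t, ~ In t bad -> ex_derive f t) ->
  forall l, Sorted Rlt l -> Forall (ex_derive (fun s => Rmax (f s) 0)) l ->
  exists l2, Sorted Rlt l2 /\ Forall (ex_derive f) l2 /\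
    padded_var (Derive (fun s => Rmax (f s) 0)) 0 l 0 <= padded_var (Derive f) 0 l2 0.
Proof.
  intros Hcont Hbad.
  apply (padded_var_lift f); intros x.
  - intros Dx; apply (Derive_pos_part f x (Hcont x) Dx).
  - intros Dx; apply (Derive_pos_part f x (Hcont x) Dx).
  - intros y Hxy Hrise.
    destruct (rise_Derive_pos f bad Hcont x y Hxy Hrise) as [c [? [? ?]]]; eauto.
  - intros y Hxy Hfall.
    destruct (fall_Derive_neg f bad Hcont x y Hxy Hfall) as [c [? [? ?]]]; eauto.
Qed.

Theorem lemma2 (f : R -> R)
  (Hcont : forall t, continuous f t)
  (Hdiff : exists bad : list R, forall t, ~ In t bad -> ex_derive f t)
  (Hev : exists tm tp : R, tm <= tp /\
     (forall t, t <= tm -> ex_derive f t /\ Derive f t = Derive f tm) /\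
     (forall t, tp <= t -> ex_derive f t /\ Derive f t = Derive f tp)) :
  Rbar_le (I_deriv (fun t => Rmax (f t) 0)) (I_deriv f).
Proof.
  destruct Hdiff as [bad Hbad], Hev as [tm [tp [_ [Hleft Hright]]]].
  destruct (Derive_pos_part_eventually_m_infty f tm Hleft) as [ml [vl Hgl]].
  destruct (Derive_pos_part_eventually_p_infty f tp Hright) as [mr [vr Hgr]].
  unfold I_deriv.
  rewrite (intrinsic_var_eventually_const _ _ ml mr vl vr
             (fun t Ht => proj2 (Hgl t Ht)) (fun t Ht => proj2 (Hgr t Ht))).
  rewrite (intrinsic_var_eventually_const (Derive f) _ tm tp (Derive f tm) (Derive f tp)
             (fun t Ht => proj2 (Hleft t (Rlt_le _ _ Ht)))
             (fun t Ht => proj2 (Hright t (Rlt_le _ _ Ht)))).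
  apply Lub_Rbar_plus_le; intros r [l [Hs [Hd ->]]].
  destruct (exists_sandwich _ l ml mr Hs Hd (fun t Ht => proj1 (Hgl t Ht))
              (fun t Ht => proj1 (Hgr t Ht))) as [lo [hi [Hlo [Hhi [Hs' Hd']]]]].
  destruct (padded_var_pos_part_lift f bad Hcont Hbad _ Hs' Hd') as [l2 [Hs2 [Hd2 Hvar]]].
  destruct (exists_sandwich _ l2 tm tp Hs2 Hd2
              (fun t Ht => proj1 (Hleft t (Rlt_le _ _ Ht)))
              (fun t Ht => proj1 (Hright t (Rlt_le _ _ Ht))))
    as [lo' [hi' [Hlo' [Hhi' [Hs3 Hd3]]]]].
  exists (var_sum (Derive f) (lo' :: l2 ++ [hi'])); split; [eauto|].
  rewrite padded_var_zero_sandwich, (proj2 (Hgl lo Hlo)), (proj2 (Hgr hi Hhi)) in Hvar.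
  rewrite var_sum_sandwich, (proj2 (Hleft lo' (Rlt_le _ _ Hlo'))),
    (proj2 (Hright hi' (Rlt_le _ _ Hhi'))).
  pose proof (var_sum_le_padded_var (Derive (fun s => Rmax (f s) 0)) vl l vr).
  pose proof (padded_var_ends (Derive f) 0 (Derive f tm) l2 0 (Derive f tp)).
  rewrite Rminus_0_r, Rminus_0_l, Rabs_Ropp in *.
  lra.
Qed.
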